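(* Let $k$ be a field, $\mathsf{E}$ a locally finite $k$-linear category, $P$ a locally finite left $\mathsf{E}$-module, and $(Q_\xi)_{\xi\in\Xi}$ an arbitrary family of big $\mathsf{E}$-submodules of $P$. Then $\bigcap_{\xi\in\Xi}Q_\xi$ is a big $\mathsf{E}$-submodule of $P$.
   Context: A small $k$-linear category $\mathsf{E}$ has $k$-vector spaces $\operatorname{Hom}_\mathsf{E}(x,y)$, $k$-bilinear associative composition and identities with $\mathrm{id}_x\ne0$. A left $\mathsf{E}$-module is a $k$-linear functor $P:\mathsf{E}\to k\text{-Vect}$; it is locally finite if every $P(x)$ is finite-dimensional. Write $x\preceq y$ if there are $n\ge1$ and objects $x=z_0,\dots,z_n=y$ with $\operatorname{Hom}_\mathsf{E}(z_{i-1},z_i)\neq0$ for all $i$. $\mathsf{E}$ is locally finite if all Hom spaces are finite-dimensional and every $\{z:x\preceq z\preceq y\}$ is finite. A left $\mathsf{E}$-module $T$ is contrafinite if for every object $y$ there is a finite set of objects $A$ such that the action map $\operatorname{Hom}_\mathsf{E}(x,y)\otimes_kT(x)\to T(y)$ vanishes for all $x\notin A$. A submodule $Q\subseteq P$ is big if $P/Q$ is contrafinite. *)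

From Stdlib Require Import List Relations.
From HB Require Import structures.
From mathcomp Require Import all_boot all_algebra.
Set Implicit Arguments. Unset Strict Implicit. Unset Printing Implicit Defensive.
Import GRing.Theory.
Local Open Scope ring_scope.

Record kcat (k : fieldType) := KCat {
  Obj : Type;
  Hom : Obj -> Obj -> lmodType k;
  comp : forall x y z, Hom y z -> Hom x y -> Hom x z;
  idm : forall x, Hom x x;
  comp_linl : forall x y z (a : k) (g1 g2 : Hom y z) (f : Hom x y),
      comp (a *: g1 + g2) f = a *: comp g1 f + comp g2 f;
  comp_linr : forall x y z (a : k) (g : Hom y z) (f1 f2 : Hom x y),
      comp g (a *: f1 + f2) = a *: comp g f1 + comp g f2;
  comp_assoc : forall x y z w (h : Hom z w) (g : Hom y z) (f : Hom x y),
      comp h (comp g f) = comp (comp h g) f;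
  comp_id_l : forall x y (f : Hom x y), comp (idm y) f = f;
  comp_id_r : forall x y (f : Hom x y), comp f (idm x) = f;
  idm_neq0 : forall x, idm x <> 0
}.

Arguments Hom {k} _ _ _.
Arguments comp {k} _ {_ _ _} _ _.
Arguments idm {k} _ _.

(* A left E-module: a k-linear functor E -> k-Vect. *)
Record kmodule (k : fieldType) (E : kcat k) := KModule {
  MObj : Obj E -> lmodType k;
  act : forall x y, Hom E x y -> MObj x -> MObj y;
  act_linf : forall x y (a : k) (f1 f2 : Hom E x y) (p : MObj x),
      act (a *: f1 + f2) p = a *: act f1 p + act f2 p;
  act_linp : forall x y (a : k) (f : Hom E x y) (p1 p2 : MObj x),
      act f (a *: p1 + p2) = a *: act f p1 + act f p2;
  act_comp : forall x y z (g : Hom E y z) (f : Hom E x y) (p : MObj x),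
      act (comp E g f) p = act g (act f p);
  act_id : forall x (p : MObj x), act (idm E x) p = p
}.

Arguments MObj {k E} _ _.
Arguments act {k E} _ {_ _} _ _.

Definition findim (k : fieldType) (V : lmodType k) : Prop :=
  exists s : seq V, forall v : V,
    exists c : 'I_(size s) -> k, v = \sum_(i < size s) c i *: s`_i.

Definition hom_nonzero (k : fieldType) (E : kcat k) (x y : Obj E) : Prop :=
  exists f : Hom E x y, f <> 0.

Definition preceq (k : fieldType) (E : kcat k) : relation (Obj E) :=
  clos_trans (Obj E) (@hom_nonzero k E).

Definition locally_finite_cat (k : fieldType) (E : kcat k) : Prop :=
  (forall x y : Obj E, findim (Hom E x y)) /\
  (forall x y : Obj E, exists s : list (Obj E),
      forall z, @preceq k E x z -> @preceq k E z y -> In z s).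

Definition locally_finite_mod (k : fieldType) (E : kcat k) (P : kmodule E) :
  Prop := forall x, findim (MObj P x).

(* Subfunctors are given by a predicate on each P(x). *)
Definition is_submodule (k : fieldType) (E : kcat k) (P : kmodule E)
  (Q : forall x, MObj P x -> Prop) : Prop :=
  (forall x, Q x 0) /\
  (forall x (a : k) (p1 p2 : MObj P x), Q x p1 -> Q x p2 -> Q x (a *: p1 + p2)) /\
  (forall x y (f : Hom E x y) (p : MObj P x), Q x p -> Q y (act P f p)).

(* Contrafinite module: for every y there is a finite A such that the action
   map Hom(x,y) (x) T(x) -> T(y) vanishes for x notin A; the image of this map
   is spanned by the images act f t of simple tensors. *)
Definition contrafinite (k : fieldType) (E : kcat k) (T : kmodule E) : Prop :=
  forall y : Obj E, exists A : list (Obj E),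
    forall x : Obj E, ~ In x A ->
      forall (f : Hom E x y) (t : MObj T x), act T f t = 0.

(* Q is big in P: P/Q is contrafinite, i.e. (unfolding the quotient module)
   for every y there is a finite A with act f p in Q(y) for all x notin A,
   f : Hom(x,y), p in P(x). *)
Definition big (k : fieldType) (E : kcat k) (P : kmodule E)
  (Q : forall x, MObj P x -> Prop) : Prop :=
  is_submodule Q /\
  forall y : Obj E, exists A : list (Obj E),
    forall x : Obj E, ~ In x A ->
      forall (f : Hom E x y) (p : MObj P x), Q y (act P f p).

Definition bigcap_sub (k : fieldType) (E : kcat k) (P : kmodule E) (I : Type)
  (Q : I -> forall x, MObj P x -> Prop) : forall x, MObj P x -> Prop :=
  fun x p => forall i, Q i x p.

(** The subspaces [Q_xi(y)] of the finite-dimensional space [P(y)] satisfy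
    the descending chain condition, so their intersection is already the
    intersection of finitely many of them.  Each of these finitely many [Q_xi]
    is big, and the union of the corresponding finite sets of exceptional
    objects is a finite set witnessing that the intersection is big. *)

From Pilot Require Import Defs.
From mathcomp Require Import all_boot all_algebra.
From Stdlib Require Import Classical List Wf_nat.
From mathcomp Require Import zify.
Set Implicit Arguments. Unset Strict Implicit. Unset Printing Implicit Defensive.
Import GRing.Theory.
Local Open Scope ring_scope.

Lemma classic_ex_minn (P : nat -> Prop) :
  (exists n, P n) -> exists2 m, P m & forall n, P n -> (m <= n)%N.
Proof.
move=> exP.
have [m [[Pm minm] _]] :=
  dec_inh_nat_subset_has_unique_least_element P (fun n => classic (P n)) exP.
by exists m => // n /minm /leP.
Qed.

Section Subspaces.
Variable k : fieldType.

Definition is_subspace (V : lmodType k) (W : V -> Prop) : Prop :=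
  W 0 /\ forall a u v, W u -> W v -> W (a *: u + v).

Lemma is_subspace_cap (V : lmodType k) (I : Type) (W : I -> V -> Prop)
    (J : I -> Prop) :
  (forall i, is_subspace (W i)) -> is_subspace (fun v => forall i, J i -> W i v).
Proof.
move=> subW; split=> [i _|a u v Wu Wv i Ji]; first by case: (subW i).
by case: (subW i) => _; apply; [apply: Wu | apply: Wv].
Qed.

Lemma is_subspace_preim (U V : lmodType k) (f : U -> V) (W : V -> Prop) :
  linear f -> is_subspace W -> is_subspace (fun u => W (f u)).
Proof.
move=> linf [W0 Wlin]; split=> [|a u v Wu Wv]; last by rewrite linf; apply: Wlin.
have -> : f 0 = 0 by rewrite -(addNr (0 : U)) -scaleN1r linf scaleN1r addNr.
exact: W0.
Qed.

Section RowSpaces.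
Variable n : nat.

Lemma is_subspace_addsmx (W : 'rV[k]_n -> Prop) (M : 'M_n) (u : 'rV_n) :
  is_subspace W -> (forall v, (v <= M)%MS -> W v) -> W u ->
  forall v, (v <= M + u)%MS -> W v.
Proof.
move=> [W0 Wlin] WM Wu _ /sub_addsmxP [[a b] /= ->].
have Wb : W (b *m u).
  have /sub_rVP [c ->] : (b *m u <= u)%MS by exact: submxMl.
  by rewrite -[c *: u]addr0; apply: Wlin.
by rewrite -[a *m M]scale1r; apply: Wlin => //; apply/WM/submxMl.
Qed.

(* A subspace is the row space of a matrix of maximal rank among those whose
   row space it contains. *)
Lemma is_subspace_row_space (W : 'rV[k]_n -> Prop) :
  is_subspace W -> exists M : 'M_n, forall v, W v <-> (v <= M)%MS.
Proof.
move=> subW; pose inW (M : 'M_n) := forall v, (v <= M)%MS -> W v.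
have inW0 : inW 0 by move=> v; rewrite submx0 => /eqP ->; case: subW.
have codim0 : exists r, exists M, inW M /\ (n - \rank M)%N = r.
  by exists (n - \rank (0 : 'M[k]_n)%R)%N, 0.
have [_ [M [WM <-]] minM] := classic_ex_minn codim0.
exists M => v; split=> [Wv|]; last exact: WM.
have /minM : exists M', inW M' /\ (n - \rank M')%N = (n - \rank (M + v))%N.
  by exists (M + v)%MS; split=> //; apply: is_subspace_addsmx.
move=> le_codim; have le_n := rank_leq_col (M + v)%MS.
have [le_rank eq_rank] := mxrank_leqif_sup (addsmxSl M v).
have sMvM : (M + v <= M)%MS by rewrite -eq_rank; apply/eqP; lia.
by apply: submx_trans sMvM; apply: addsmxSr.
Qed.

(* An intersection of finitely many [W i] whose row space has minimal rank
   cannot be shrunk by any further [W i]. *)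
Lemma row_subspaces_cap_finite (I : Type) (W : I -> 'rV[k]_n -> Prop) :
  (forall i, is_subspace (W i)) ->
  exists L : list I, forall v, (forall i, In i L -> W i v) -> forall i, W i v.
Proof.
move=> subW.
pose repr L (M : 'M_n) := forall v, (forall i, In i L -> W i v) <-> (v <= M)%MS.
have repr_nil : repr nil 1%:M by move=> v; split=> [_|_ i []]; rewrite submx1.
have rank_nil : exists r, exists L M, repr L M /\ \rank M = r.
  by exists (\rank (1%:M : 'M[k]_n)), nil, 1%:M.
have [_ [L [M [reprLM <-]]] minM] := classic_ex_minn rank_nil.
exists L => v /reprLM vM i.
have [M' reprM'] :=
  is_subspace_row_space (is_subspace_cap (fun j => In j (i :: L)) subW).
have sM'M : (M' <= M)%MS.
  apply/row_subP => j; apply/reprLM => l Ll.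
  by have /reprM' := row_sub j M'; apply; right.
have /minM le_rank : exists L M, repr L M /\ \rank M = \rank M'.
  by exists (i :: L), M'.
have [le_M'M eq_rank] := mxrank_leqif_sup sM'M.
have sMM' : (M <= M')%MS by rewrite -eq_rank eqn_leq le_M'M.
by have /reprM' := submx_trans vM sMM'; apply; left.
Qed.
End RowSpaces.

Lemma findim_row_coords (V : lmodType k) :
  findim V ->
  exists n (f : 'rV[k]_n -> V), linear f /\ forall v, exists c, f c = v.
Proof.
move=> [s spans].
exists (size s), (fun c : 'rV_(size s) => \sum_(i < size s) c 0 i *: s`_i).
split.
  move=> a u w; rewrite scaler_sumr -big_split.
  by apply: eq_bigr => i _; rewrite !mxE scalerDl scalerA.
move=> v; have [c ->] := spans v; exists (\row_i c i).
by apply: eq_bigr => i _; rewrite mxE.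
Qed.

Lemma findim_subspaces_cap_finite (V : lmodType k) (I : Type)
    (W : I -> V -> Prop) :
  findim V -> (forall i, is_subspace (W i)) ->
  exists L : list I, forall v, (forall i, In i L -> W i v) -> forall i, W i v.
Proof.
move=> /findim_row_coords [n [f [linf onto_f]]] subW.
have [L capL] :=
  row_subspaces_cap_finite (fun i => is_subspace_preim linf (subW i)).
by exists L => v; have [c <-] := onto_f v; apply: capL.
Qed.
End Subspaces.

Section BigSubmodules.
Variables (k : fieldType) (E : kcat k) (P : kmodule E) (I : Type).

Lemma is_submodule_subspace (x : Obj E) (R : forall z, MObj P z -> Prop) :
  is_submodule R -> is_subspace (R x).
Proof. by case=> R0 [Rlin _]; split; [apply: R0 | apply: Rlin]. Qed.

Lemma is_submodule_bigcap (Q : I -> forall x, MObj P x -> Prop) :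
  (forall i, is_submodule (Q i)) -> is_submodule (bigcap_sub Q).
Proof.
move=> subQ; split; [|split].
- by move=> x i; case: (subQ i).
- by move=> x a p1 p2 Qp1 Qp2 i; case: (subQ i) => _ [Qlin _]; apply: Qlin.
- by move=> x y f p Qp i; case: (subQ i) => _ [_ Qact]; apply: Qact.
Qed.

Lemma big_exceptions_list (Q : I -> forall x, MObj P x -> Prop) (y : Obj E)
    (L : list I) :
  (forall i, big (Q i)) -> exists A : list (Obj E), forall x, ~ In x A ->
    forall (f : Defs.Hom E x y) (p : MObj P x) i, In i L -> Q i y (act P f p).
Proof.
move=> bigQ; elim: L => [|i L [A excA]]; first by exists nil => x _ f p i [].
have [_ /(_ y) [B excB]] := bigQ i.
exists (B ++ A) => x nABx f p j [<-|Lj].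
- by apply: excB => Bx; apply: nABx; apply: in_or_app; left.
- by apply: excA => // Ax; apply: nABx; apply: in_or_app; right.
Qed.

End BigSubmodules.

Theorem lemma4p10 (k : fieldType) (E : kcat k) (P : kmodule E) (Xi : Type)
  (Q : Xi -> forall x, MObj P x -> Prop) :
  locally_finite_cat E ->
  locally_finite_mod P ->
  (forall xi, big (Q xi)) ->
  big (bigcap_sub Q).
Proof.
move=> _ findimP bigQ; split.
  by apply: is_submodule_bigcap => xi; case: (bigQ xi).
move=> y; have [L capL] := findim_subspaces_cap_finite (findimP y)
  (fun xi => is_submodule_subspace y (proj1 (bigQ xi))).
have [A excA] := big_exceptions_list y L bigQ.
by exists A => x nAx f p; apply: capL => xi; apply: excA.
Qed.
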